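(* A hyperfield $H$ is isomorphic to a generalised tropical hyperfield $\mathcal{T}(\Gamma)$ for some ordered abelian group $\Gamma$ if and only if $H$ is stringent, has characteristic $2$ (i.e. $0\in 1+1$) and has C-characteristic $1$ (i.e. $1\in 1+1$).
   Context: A hyperfield is $(F,+,\cdot,0,1)$ with $+$ a multivalued operation making $(F,+,0)$ a canonical hypergroup (associative, commutative, unique inverses $-x$ with $0\in x+(-x)$, and $z\in x+y\Rightarrow y\in z+(-x)$), $(F,\cdot)$ commutative with $0$ absorbing, $x(y+z)=xy+xz$, and $F\setminus\{0\}$ an abelian group with neutral $1\neq0$. Isomorphism of hyperfields: a bijection $\sigma$ preserving $0,1$, products, inverses, with $\sigma(x+y)\subseteq\sigma(x)+\sigma(y)$, whose inverse has the same properties. A hyperfield is stringent if $x+y$ is a singleton whenever $0\notin x+y$. For an ordered abelian group $(\Gamma,+,<,0)$ and $\infty>\Gamma$ with $\gamma+\infty=\infty+\gamma=\infty$, $\mathcal{T}(\Gamma)$ is the hyperfield on $\Gamma\cup\{\infty\}$ with multiplication $+$, zero $\infty$, unit $0$, and hyperaddition $x\boxplus\infty=\infty\boxplus x=\{x\}$, $x\boxplus y=\{\min\{x,y\}\}$ for $x\neq y$, $x\boxplus x=\{z:x\le z\le\infty\}$. *)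

(** Raw data of a hyperfield: [hadd x y z] means z \in x + y. *)
Record HypStruct := {
  hcar  : Type;
  hadd  : hcar -> hcar -> hcar -> Prop;
  hmul  : hcar -> hcar -> hcar;
  hzero : hcar;
  hone  : hcar;
  hneg  : hcar -> hcar;
  hinv  : hcar -> hcar
}.

Definition is_hyperfield (H : HypStruct) : Prop :=
  let add := hadd H in let mul := hmul H in
  let z0 := hzero H in let o1 := hone H in let ng := hneg H in
  (forall x y, exists z, add x y z) /\
  (forall x y z w, (exists u, add x y u /\ add u z w) <->
                   (exists v, add y z v /\ add x v w)) /\
  (forall x y z, add x y z <-> add y x z) /\
  (forall x z, add x z0 z <-> z = x) /\
  (forall x, add x (ng x) z0) /\
  (forall x y, add x y z0 -> y = ng x) /\
  (forall x y z, add x y z -> add z (ng x) y) /\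
  (forall x y, mul x y = mul y x) /\
  (forall x y z, mul x (mul y z) = mul (mul x y) z) /\
  (forall x, mul o1 x = x) /\
  (forall x, mul z0 x = z0) /\
  (forall x y z w, (exists u, add y z u /\ w = mul x u) <-> add (mul x y) (mul x z) w) /\
  o1 <> z0 /\
  (forall x y, x <> z0 -> y <> z0 -> mul x y <> z0) /\
  (forall x, x <> z0 -> mul x (hinv H x) = o1).

Definition stringent (H : HypStruct) : Prop :=
  forall x y, ~ hadd H x y (hzero H) ->
    exists w, forall z, hadd H x y z <-> z = w.

Definition hf_morph (H1 H2 : HypStruct) (f : hcar H1 -> hcar H2) : Prop :=
  f (hzero H1) = hzero H2 /\
  f (hone H1) = hone H2 /\
  (forall x y, f (hmul H1 x y) = hmul H2 (f x) (f y)) /\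
  (forall x, f (hneg H1 x) = hneg H2 (f x)) /\
  (forall x, x <> hzero H1 -> f (hinv H1 x) = hinv H2 (f x)) /\
  (forall x y z, hadd H1 x y z -> hadd H2 (f x) (f y) (f z)).

Definition hf_iso (H1 H2 : HypStruct) : Prop :=
  exists (f : hcar H1 -> hcar H2) (g : hcar H2 -> hcar H1),
    (forall x, g (f x) = x) /\ (forall y, f (g y) = y) /\
    hf_morph H1 H2 f /\ hf_morph H2 H1 g.

Record OrdAbGroup := {
  gcar : Type;
  gadd : gcar -> gcar -> gcar;
  g0   : gcar;
  gopp : gcar -> gcar;
  gle  : gcar -> gcar -> Prop;
  gaddA : forall a b c, gadd a (gadd b c) = gadd (gadd a b) c;
  gaddC : forall a b, gadd a b = gadd b a;
  gadd0 : forall a, gadd a g0 = a;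
  gaddN : forall a, gadd a (gopp a) = g0;
  gle_refl : forall a, gle a a;
  gle_anti : forall a b, gle a b -> gle b a -> a = b;
  gle_trans : forall a b c, gle a b -> gle b c -> gle a c;
  gle_total : forall a b, gle a b \/ gle b a;
  gle_add : forall a b c, gle a b -> gle (gadd a c) (gadd b c)
}.

(** The generalised tropical hyperfield T(Gamma); [None] plays the role of
    infinity. *)
Definition trop_add (G : OrdAbGroup) (x y z : option (gcar G)) : Prop :=
  match x, y with
  | None, _ => z = y
  | Some _, None => z = x
  | Some a, Some b =>
      (a <> b /\ ((gle G a b /\ z = Some a) \/ (gle G b a /\ z = Some b))) \/
      (a = b /\ forall c, z = Some c -> gle G a c)
  end.

Definition trop_mul (G : OrdAbGroup) (x y : option (gcar G)) : option (gcar G) :=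
  match x, y with
  | Some a, Some b => Some (gadd G a b)
  | _, _ => None
  end.

Definition tropical (G : OrdAbGroup) : HypStruct := {|
  hcar := option (gcar G);
  hadd := trop_add G;
  hmul := trop_mul G;
  hzero := None;
  hone := Some (g0 G);
  hneg := fun x => x;
  hinv := option_map (gopp G)
|}.

(* In a stringent hyperfield with 0, 1 in 1 + 1 the relation "x + y contains x"
   is a total order compatible with multiplication, and the sum of two distinct
   elements is their minimum for it, while x + x is the up-set of x.  Hence the
   nonzero elements form an ordered abelian group Gamma and adjoining 0 as
   infinity identifies H with T(Gamma).  Conversely T(Gamma) visibly has the
   three properties, and they are preserved by isomorphisms. *)

From Stdlib Require Import ClassicalEpsilon ProofIrrelevance.

Section HyperfieldAxioms.

Variable H : HypStruct.
Hypothesis hH : is_hyperfield H.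

Lemma hadd_total x y : exists z, hadd H x y z.
Proof. destruct hH as (hadd_total & _). exact (hadd_total x y). Qed.

Lemma hadd_assoc x y z w :
  (exists u, hadd H x y u /\ hadd H u z w) <-> (exists v, hadd H y z v /\ hadd H x v w).
Proof. destruct hH as (_ & hadd_assoc & _). exact (hadd_assoc x y z w). Qed.

Lemma hadd_comm x y z : hadd H x y z <-> hadd H y x z.
Proof. destruct hH as (_ & _ & hadd_comm & _). exact (hadd_comm x y z). Qed.

Lemma hadd_zero_r x z : hadd H x (hzero H) z <-> z = x.
Proof. destruct hH as (_ & _ & _ & hadd_zero_r & _). exact (hadd_zero_r x z). Qed.

Lemma hadd_zero_l y z : hadd H (hzero H) y z <-> z = y.
Proof. rewrite hadd_comm. apply hadd_zero_r. Qed.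

Lemma hadd_opp_unique x y : hadd H x y (hzero H) -> y = hneg H x.
Proof. destruct hH as (_ & _ & _ & _ & _ & hadd_opp_unique & _). apply hadd_opp_unique. Qed.

Lemma hadd_reverse x y z : hadd H x y z -> hadd H z (hneg H x) y.
Proof. destruct hH as (_ & _ & _ & _ & _ & _ & hadd_reverse & _). apply hadd_reverse. Qed.

Lemma hmul_comm x y : hmul H x y = hmul H y x.
Proof. destruct hH as (_ & _ & _ & _ & _ & _ & _ & hmul_comm & _). apply hmul_comm. Qed.

Lemma hmul_assoc x y z : hmul H x (hmul H y z) = hmul H (hmul H x y) z.
Proof. destruct hH as (_ & _ & _ & _ & _ & _ & _ & _ & hmul_assoc & _). apply hmul_assoc. Qed.

Lemma hmul_one_l x : hmul H (hone H) x = x.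
Proof. destruct hH as (_ & _ & _ & _ & _ & _ & _ & _ & _ & hmul_one_l & _). apply hmul_one_l. Qed.

Lemma hmul_zero_l x : hmul H (hzero H) x = hzero H.
Proof.
  destruct hH as (_ & _ & _ & _ & _ & _ & _ & _ & _ & _ & hmul_zero_l & _).
  apply hmul_zero_l.
Qed.

Lemma hmul_one_r x : hmul H x (hone H) = x.
Proof. rewrite hmul_comm. apply hmul_one_l. Qed.

Lemma hmul_zero_r x : hmul H x (hzero H) = hzero H.
Proof. rewrite hmul_comm. apply hmul_zero_l. Qed.

Lemma hadd_mul_l x y z u :
  hadd H y z u -> hadd H (hmul H x y) (hmul H x z) (hmul H x u).
Proof.
  destruct hH as (_ & _ & _ & _ & _ & _ & _ & _ & _ & _ & _ & hmul_add_distr & _).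
  intro yzu. apply hmul_add_distr. exists u. split; [exact yzu | reflexivity].
Qed.

Lemma one_neq_zero : hone H <> hzero H.
Proof. destruct hH as (_ & _ & _ & _ & _ & _ & _ & _ & _ & _ & _ & _ & one_neq_zero & _). exact one_neq_zero. Qed.

Lemma hmul_neq_zero x y : x <> hzero H -> y <> hzero H -> hmul H x y <> hzero H.
Proof. destruct hH as (_ & _ & _ & _ & _ & _ & _ & _ & _ & _ & _ & _ & _ & hmul_neq_zero & _). apply hmul_neq_zero. Qed.

Lemma hmul_inv_r x : x <> hzero H -> hmul H x (hinv H x) = hone H.
Proof. destruct hH as (_ & _ & _ & _ & _ & _ & _ & _ & _ & _ & _ & _ & _ & _ & hmul_inv_r). apply hmul_inv_r. Qed.

Lemma hinv_neq_zero x : x <> hzero H -> hinv H x <> hzero H.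
Proof.
  intros x_neq0 inv0. apply one_neq_zero.
  rewrite <- (hmul_inv_r x x_neq0), inv0. apply hmul_zero_r.
Qed.

(** The order of the valuation: [hle x y] reads "x <= y" in T(Gamma). *)
Definition hle x y := hadd H x y x.

Lemma hle_zero x : hle x (hzero H).
Proof. unfold hle. apply hadd_zero_r. reflexivity. Qed.

Lemma hle_mul x y c : hle x y -> hle (hmul H x c) (hmul H y c).
Proof.
  unfold hle. intro xy. rewrite (hmul_comm x c), (hmul_comm y c).
  apply hadd_mul_l. exact xy.
Qed.

Section Characteristic2.

Hypothesis one_add_one_zero : hadd H (hone H) (hone H) (hzero H).

Lemma hadd_diag_zero x : hadd H x x (hzero H).
Proof.
  rewrite <- (hmul_one_r x) at 1 2. rewrite <- (hmul_zero_r x).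
  apply hadd_mul_l. exact one_add_one_zero.
Qed.

Lemma hneg_id x : hneg H x = x.
Proof. symmetry. apply hadd_opp_unique, hadd_diag_zero. Qed.

Lemma hadd_neq_zero x y : x <> y -> ~ hadd H x y (hzero H).
Proof. intros x_neq_y xy0. apply x_neq_y. rewrite (hadd_opp_unique x y xy0). symmetry. apply hneg_id. Qed.

Lemma hadd_diag x z : hadd H x x z <-> hle x z.
Proof.
  unfold hle. split; intro h.
  - apply hadd_comm. rewrite <- (hneg_id x) at 1. apply hadd_reverse. exact h.
  - rewrite <- (hneg_id x) at 2. apply hadd_reverse. exact h.
Qed.

Hypothesis one_add_one_one : hadd H (hone H) (hone H) (hone H).

Lemma hle_refl x : hle x x.
Proof.
  unfold hle. rewrite <- (hmul_one_r x).
  apply hadd_mul_l. exact one_add_one_one.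
Qed.

Hypothesis hs : stringent H.

Lemma hadd_neq_unique x y : x <> y -> exists w, forall z, hadd H x y z <-> z = w.
Proof. intro x_neq_y. apply hs, hadd_neq_zero, x_neq_y. Qed.

(* x + y = {w} with w <> y would give x and w both in w + y = x + (y + y),
   from 0 in y + y and y in y + y respectively. *)
Lemma hadd_neq_cases x y z : x <> y -> hadd H x y z -> z = x \/ z = y.
Proof.
  intros x_neq_y xyz.
  destruct (hadd_neq_unique x y x_neq_y) as [w xy_w].
  assert (z = w) as -> by (apply xy_w; exact xyz).
  destruct (classic (w = y)) as [w_y | w_neq_y]; [right; exact w_y | left].
  destruct (hadd_neq_unique w y w_neq_y) as [w' wy_w'].
  assert (hadd H w y x) as wyx.
  { destruct (proj2 (hadd_assoc x y y x)) as [u [xyu uyx]].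
    - exists (hzero H). split; [apply hadd_diag_zero | apply hadd_zero_r; reflexivity].
    - apply xy_w in xyu. subst u. exact uyx. }
  assert (hadd H w y w) as wyw.
  { destruct (proj2 (hadd_assoc x y y w)) as [u [xyu uyw]].
    - exists y. split; [apply hle_refl | apply xy_w; reflexivity].
    - apply xy_w in xyu. subst u. exact uyw. }
  apply wy_w' in wyx. apply wy_w' in wyw. congruence.
Qed.

Lemma hle_total x y : hle x y \/ hle y x.
Proof.
  unfold hle.
  destruct (classic (x = y)) as [<- | x_neq_y]; [left; apply hle_refl |].
  destruct (hadd_total x y) as [z xyz].
  destruct (hadd_neq_cases x y z x_neq_y xyz) as [<- | <-]; [left | right].
  - exact xyz.
  - apply hadd_comm. exact xyz.
Qed.

Lemma hadd_neq x y z :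
  x <> y -> (hadd H x y z <-> (hle x y /\ z = x) \/ (hle y x /\ z = y)).
Proof.
  unfold hle. intros x_neq_y. split.
  - intro xyz. destruct (hadd_neq_cases x y z x_neq_y xyz) as [-> | ->].
    + left. split; [exact xyz | reflexivity].
    + right. split; [apply hadd_comm; exact xyz | reflexivity].
  - intros [[xy ->] | [yx ->]]; [exact xy | apply hadd_comm; exact yx].
Qed.

Lemma hle_anti x y : hle x y -> hle y x -> x = y.
Proof.
  unfold hle. intros xy yx.
  destruct (classic (x = y)) as [x_y | x_neq_y]; [exact x_y |].
  destruct (hadd_neq_unique x y x_neq_y) as [w xy_w].
  apply hadd_comm, xy_w in yx. apply xy_w in xy. congruence.
Qed.

Lemma hle_trans x y z : hle x y -> hle y z -> hle x z.
Proof.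
  intros xy yz.
  destruct (classic (x = y)) as [<- | x_neq_y]; [exact yz |].
  destruct (classic (y = z)) as [<- | y_neq_z]; [exact xy |].
  destruct (hadd_neq_unique x y x_neq_y) as [w xy_w].
  destruct (hadd_neq_unique y z y_neq_z) as [w' yz_w'].
  destruct (hadd_total x z) as [u xzu].
  destruct (proj1 (hadd_assoc x y z u)) as [v [yzv xvu]].
  - exists x. split; [exact xy | exact xzu].
  - apply yz_w' in yzv. apply yz_w' in yz. subst v w'.
    apply xy_w in xvu. apply xy_w in xy. unfold hle. congruence.
Qed.

End Characteristic2.

End HyperfieldAxioms.

Lemma hf_iso_of_inverse_morph (H1 H2 : HypStruct)
    (f : hcar H1 -> hcar H2) (g : hcar H2 -> hcar H1) :
  (forall x, g (f x) = x) -> (forall y, f (g y) = y) ->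
  g (hzero H2) = hzero H1 ->
  g (hone H2) = hone H1 ->
  (forall x y, g (hmul H2 x y) = hmul H1 (g x) (g y)) ->
  (forall x, g (hneg H2 x) = hneg H1 (g x)) ->
  (forall x, x <> hzero H2 -> g (hinv H2 x) = hinv H1 (g x)) ->
  (forall x y z, hadd H2 x y z <-> hadd H1 (g x) (g y) (g z)) ->
  hf_iso H1 H2.
Proof.
  intros gf fg g0 g1 gmul gneg ginv gadd.
  assert (g_inj : forall x y, g x = g y -> x = y).
  { intros x y e. rewrite <- (fg x), <- (fg y), e. reflexivity. }
  exists f, g. split; [exact gf | split; [exact fg | split]].
  - repeat split.
    + apply g_inj. rewrite gf. symmetry. exact g0.
    + apply g_inj. rewrite gf. symmetry. exact g1.
    + intros x y. apply g_inj. rewrite gmul, !gf. reflexivity.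
    + intro x. apply g_inj. rewrite gneg, !gf. reflexivity.
    + intros x x_neq0. apply g_inj. rewrite ginv, !gf; [reflexivity |].
      intro fx0. apply x_neq0. rewrite <- (gf x), fx0. exact g0.
    + intros x y z xyz. apply gadd. rewrite !gf. exact xyz.
  - repeat split; try assumption.
    intros x y z. apply gadd.
Qed.

Lemma stringent_iso (H1 H2 : HypStruct) :
  hf_iso H1 H2 -> stringent H2 -> stringent H1.
Proof.
  intros (f & g & gf & _ & (_ & _ & _ & _ & _ & fadd) & (g0 & _ & _ & _ & _ & gadd)) hs2.
  intros x y xy_not0.
  destruct (hs2 (f x) (f y)) as [w fxy_w].
  { intro fxy0. apply xy_not0. rewrite <- (gf x), <- (gf y), <- g0. apply gadd. exact fxy0. }
  exists (g w). intro z. split.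
  - intro xyz. apply fadd, fxy_w in xyz. rewrite <- xyz. symmetry. apply gf.
  - intros ->. rewrite <- (gf x), <- (gf y). apply gadd, fxy_w. reflexivity.
Qed.

Lemma hf_iso_one_add_one (H1 H2 : HypStruct) : hf_iso H1 H2 ->
  (hadd H2 (hone H2) (hone H2) (hzero H2) -> hadd H1 (hone H1) (hone H1) (hzero H1)) /\
  (hadd H2 (hone H2) (hone H2) (hone H2) -> hadd H1 (hone H1) (hone H1) (hone H1)).
Proof.
  intros (f & g & _ & _ & _ & (g0 & g1 & _ & _ & _ & gadd)).
  split; intro h; rewrite <- g1; [rewrite <- g0 |]; apply gadd; exact h.
Qed.

Section Tropical.

Variable G : OrdAbGroup.

Lemma trop_stringent : stringent (tropical G).
Proof.
  intros [a|] [b|] not0; simpl in *.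
  - assert (a <> b) as a_neq_b.
    { intros <-. apply not0. right. split; [reflexivity | discriminate]. }
    destruct (gle_total G a b) as [ab | ba]; [exists (Some a) | exists (Some b)];
      intro z; split.
    + intros [[_ [[_ ->] | [ba ->]]] | [a_b _]]; [reflexivity | | contradiction].
      rewrite (gle_anti G a b ab ba). reflexivity.
    + intros ->. left. split; [exact a_neq_b | left; split; [exact ab | reflexivity]].
    + intros [[_ [[ab ->] | [_ ->]]] | [a_b _]]; [| reflexivity | contradiction].
      rewrite (gle_anti G a b ab ba). reflexivity.
    + intros ->. left. split; [exact a_neq_b | right; split; [exact ba | reflexivity]].
  - exists (Some a). intro z. tauto.
  - exists (Some b). intro z. tauto.
  - exists None. intro z. tauto.
Qed.

Lemma trop_one_add_one_zero : hadd (tropical G) (hone _) (hone _) (hzero _).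
Proof. simpl. right. split; [reflexivity | discriminate]. Qed.

Lemma trop_one_add_one_one : hadd (tropical G) (hone _) (hone _) (hone _).
Proof. simpl. right. split; [reflexivity |]. intros c [= <-]. apply gle_refl. Qed.

End Tropical.

Section ValueGroup.

Variable H : HypStruct.
Hypothesis hH : is_hyperfield H.
Hypothesis one_add_one_zero : hadd H (hone H) (hone H) (hzero H).
Hypothesis one_add_one_one : hadd H (hone H) (hone H) (hone H).
Hypothesis hs : stringent H.

Definition nonzero := {x : hcar H | x <> hzero H}.

Lemma nonzero_eq (a b : nonzero) : proj1_sig a = proj1_sig b -> a = b.
Proof. destruct a, b. simpl. intros ->. f_equal. apply proof_irrelevance. Qed.

Definition nz_mul (a b : nonzero) : nonzero :=
  exist (fun x => x <> hzero H) _ (hmul_neq_zero H hH _ _ (proj2_sig a) (proj2_sig b)).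

Definition nz_one : nonzero := exist (fun x => x <> hzero H) _ (one_neq_zero H hH).

Definition nz_inv (a : nonzero) : nonzero :=
  exist (fun x => x <> hzero H) _ (hinv_neq_zero H hH _ (proj2_sig a)).

Definition nz_le (a b : nonzero) : Prop := hle H (proj1_sig a) (proj1_sig b).

Lemma nz_mulA a b c : nz_mul a (nz_mul b c) = nz_mul (nz_mul a b) c.
Proof. apply nonzero_eq, hmul_assoc, hH. Qed.

Lemma nz_mulC a b : nz_mul a b = nz_mul b a.
Proof. apply nonzero_eq, hmul_comm, hH. Qed.

Lemma nz_mul1 a : nz_mul a nz_one = a.
Proof. apply nonzero_eq, hmul_one_r, hH. Qed.

Lemma nz_mulV a : nz_mul a (nz_inv a) = nz_one.
Proof. apply nonzero_eq, hmul_inv_r, proj2_sig. exact hH. Qed.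

Lemma nz_le_refl a : nz_le a a.
Proof. apply hle_refl; assumption. Qed.

Lemma nz_le_anti a b : nz_le a b -> nz_le b a -> a = b.
Proof. intros ab ba. apply nonzero_eq. apply (hle_anti H); assumption. Qed.

Lemma nz_le_trans a b c : nz_le a b -> nz_le b c -> nz_le a c.
Proof. apply (hle_trans H); assumption. Qed.

Lemma nz_le_total a b : nz_le a b \/ nz_le b a.
Proof. apply (hle_total H); assumption. Qed.

Lemma nz_le_mul a b c : nz_le a b -> nz_le (nz_mul a c) (nz_mul b c).
Proof. apply hle_mul, hH. Qed.

Definition value_group : OrdAbGroup := {|
  gcar := nonzero;
  gadd := nz_mul;
  g0 := nz_one;
  gopp := nz_inv;
  gle := nz_le;
  gaddA := nz_mulA;
  gaddC := nz_mulC;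
  gadd0 := nz_mul1;
  gaddN := nz_mulV;
  gle_refl := nz_le_refl;
  gle_anti := nz_le_anti;
  gle_trans := nz_le_trans;
  gle_total := nz_le_total;
  gle_add := nz_le_mul
|}.

Definition of_trop (y : option nonzero) : hcar H :=
  match y with None => hzero H | Some a => proj1_sig a end.

Definition to_trop (x : hcar H) : option nonzero :=
  match excluded_middle_informative (x = hzero H) with
  | left _ => None
  | right x_neq0 => Some (exist _ x x_neq0)
  end.

Lemma of_to_trop x : of_trop (to_trop x) = x.
Proof. unfold to_trop. destruct excluded_middle_informative as [x0 | x_neq0]; [symmetry; exact x0 | reflexivity]. Qed.

Lemma to_of_trop y : to_trop (of_trop y) = y.
Proof.
  unfold to_trop. destruct excluded_middle_informative as [y0 | y_neq0], y as [a |];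
    simpl in *.
  - destruct (proj2_sig a y0).
  - reflexivity.
  - f_equal. apply nonzero_eq. reflexivity.
  - contradiction.
Qed.

Lemma of_trop_inj y y' : of_trop y = of_trop y' -> y = y'.
Proof. intro e. rewrite <- (to_of_trop y), <- (to_of_trop y'), e. reflexivity. Qed.

Lemma of_trop_le a y : hle H (proj1_sig a) (of_trop y) <->
  (forall c, y = Some c -> nz_le a c).
Proof.
  destruct y as [b |]; simpl; split.
  - intros ab c [= <-]. exact ab.
  - intro h. apply h. reflexivity.
  - intros _ c [=].
  - intros _. apply hle_zero, hH.
Qed.

Lemma of_trop_hadd y y' y'' :
  trop_add value_group y y' y'' <-> hadd H (of_trop y) (of_trop y') (of_trop y'').
Proof.
  destruct y as [a |], y' as [b |]; simpl.
  - destruct (classic (a = b)) as [<- | a_neq_b].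
    + rewrite hadd_diag, of_trop_le by assumption. tauto.
    + assert (proj1_sig a <> proj1_sig b) as val_neq by (intro e; apply a_neq_b, nonzero_eq, e).
      rewrite hadd_neq by assumption.
      split.
      * intros [[_ [[ab ->] | [ba ->]]] | [a_b _]]; [left | right | contradiction]; tauto.
      * intros [[ab e] | [ba e]]; left; split; try exact a_neq_b;
          [left | right]; split; try assumption; apply of_trop_inj; exact e.
  - rewrite hadd_zero_r by assumption.
    split; [intros ->; reflexivity | intro e; apply of_trop_inj, e].
  - rewrite hadd_zero_l by assumption.
    split; [intros ->; reflexivity | intro e; apply of_trop_inj, e].
  - rewrite hadd_zero_l by assumption.
    split; [intros ->; reflexivity | intro e; apply of_trop_inj, e].
Qed.

Lemma value_group_iso : hf_iso H (tropical value_group).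
Proof.
  apply (hf_iso_of_inverse_morph H (tropical value_group) to_trop of_trop).
  - exact of_to_trop.
  - exact to_of_trop.
  - reflexivity.
  - reflexivity.
  - intros [a |] [b |]; simpl; symmetry;
      [reflexivity | apply hmul_zero_r | apply hmul_zero_l | apply hmul_zero_l]; exact hH.
  - intro y. symmetry. apply hneg_id; assumption.
  - intros [a |] a_neq0; [reflexivity | contradiction].
  - exact of_trop_hadd.
Qed.

End ValueGroup.

Theorem theorem5p2 (H : HypStruct) (hH : is_hyperfield H) :
  (exists G : OrdAbGroup, hf_iso H (tropical G)) <->
  (stringent H /\
   hadd H (hone H) (hone H) (hzero H) /\
   hadd H (hone H) (hone H) (hone H)).
Proof.
  split.
  - intros [G iso].
    destruct (hf_iso_one_add_one _ _ iso) as [char2 cchar1].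
    split; [| split].
    + exact (stringent_iso _ _ iso (trop_stringent G)).
    + exact (char2 (trop_one_add_one_zero G)).
    + exact (cchar1 (trop_one_add_one_one G)).
  - intros (hs & one_add_one_zero & one_add_one_one).
    exists (value_group H hH one_add_one_zero one_add_one_one hs).
    apply value_group_iso.
Qed.
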